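(* Let $\Sigma$ be an alphabet. The mapping $F$ sending a partial probabilistic system $(S,i,Supp,\mu)$ to its underlying transition system $(S,i,Supp)$, and a morphism to its underlying function, is a functor $F:\mathbf{Prob}_{\Sigma}\to\mathbf{TS}_{\Sigma}$, and this functor is a coreflection.
   Context: $\mathbf{TS}_{\Sigma}$: objects are transition systems $(S,i,\Delta)$ with $i\in S$, $\Delta\subseteq S\times\Sigma\times S$; morphisms are functions $f$ on states with $f(i)=i'$ and $(f(s),a,f(s'))\in\Delta'$ for all $(s,a,s')\in\Delta$. A partial probabilistic system is a quadruple $(S,i,Supp,\mu)$ where $(S,i,Supp)$ is a transition system (the support relation $Supp\subseteq S\times\Sigma\times S$) and $\mu:Supp\to[0,1]$ is such that for every $s\in S$ and $a\in\Sigma$, the set $\{t\mid\mu(s,a,t)>0\}$ is finite and $\sum_{(s,a,t)\in Supp}\mu(s,a,t)\le1$. A morphism $(S,i,Supp,\mu)\to(S',i',Supp',\mu')$ is a morphism $f$ of the underlying transition systems such that for every $(s,a,t)\in Supp$, $\sum_{(s,a,t')\in Supp,\ f(t')=f(t)}\mu(s,a,t')\le\mu'(f(s),a,f(t))$. These form the category $\mathbf{Prob}_{\Sigma}$. A functor is a coreflection if it is a right adjoint whose left adjoint is fully faithful (equivalently, a right adjoint whose adjunction unit is a natural isomorphism). *)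

From Stdlib Require Import Reals List.
Open Scope R_scope.
Set Implicit Arguments.

Record TS (Sigma : Type) := mkTS {
  st : Type;
  init : st;
  trans : st -> Sigma -> st -> Prop }.
Arguments st {Sigma}.
Arguments init {Sigma}.
Arguments trans {Sigma}.

Definition is_ts_mor {Sigma} (A B : TS Sigma) (f : st A -> st B) : Prop :=
  f (init A) = init B /\
  forall s a t, trans A s a t -> trans B (f s) a (f t).

Definition lsum {T} (w : T -> R) (l : list T) : R :=
  fold_right (fun x acc => w x + acc) 0 l.

Definition finite_pred {T} (P : T -> Prop) : Prop :=
  exists l : list T, forall x, P x -> In x l.

(** "sum_{x | P x} w x <= c" for a weight w that is nonnegative on P: every
    finite partial sum (over distinct elements of P) is bounded by c. *)
Definition sum_le {T} (P : T -> Prop) (w : T -> R) (c : R) : Prop :=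
  forall l : list T, NoDup l -> (forall x, In x l -> P x) -> lsum w l <= c.

(** Partial probabilistic systems (S, i, Supp, mu).  mu is given as a total
    function on S x Sigma x S, but only its values on Supp are ever used. *)
Record Prob (Sigma : Type) := mkProb {
  pts : TS Sigma;
  mu : st pts -> Sigma -> st pts -> R;
  mu_range : forall s a t, trans pts s a t -> 0 <= mu s a t <= 1;
  mu_fin : forall s a, finite_pred (fun t => trans pts s a t /\ 0 < mu s a t);
  mu_sum : forall s a, sum_le (fun t => trans pts s a t) (fun t => mu s a t) 1 }.
Arguments pts {Sigma}.
Arguments mu {Sigma}.

Definition is_prob_mor {Sigma} (P Q : Prob Sigma) (f : st (pts P) -> st (pts Q)) : Prop :=
  is_ts_mor (pts P) (pts Q) f /\
  forall s a t, trans (pts P) s a t ->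
    sum_le (fun t' => trans (pts P) s a t' /\ f t' = f t)
           (fun t' => mu P s a t') (mu Q (f s) a (f t)).

Definition F_ob {Sigma} (P : Prob Sigma) : TS Sigma := pts P.
Definition F_mor {Sigma} (P Q : Prob Sigma) (f : st (pts P) -> st (pts Q))
  : st (F_ob P) -> st (F_ob Q) := f.

(** Composites of morphisms are morphisms by regrouping: the mass [mu P s a] on a
    fibre of [g \o f] splits into fibres of [f], each bounded by the [Q]-mass at
    its image, and these images form a fibre of [g] in [Q].  The left adjoint of
    the forgetful functor puts the zero weight on a transition system: the
    morphism inequality then holds for every TS-morphism out of it, so the
    unit is the identity. *)

From Stdlib Require Import Reals List Lra ClassicalEpsilon.

Lemma lsum_filter_split {T} (w : T -> R) (p : T -> bool) (l : list T) :
  lsum w l = lsum w (filter p l) + lsum w (filter (fun x => negb (p x)) l).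
Proof.
  induction l as [|x l IH]; simpl; [lra|].
  destruct (p x); simpl; rewrite IH; lra.
Qed.

Lemma lsum_zero {T} (l : list T) : lsum (fun _ => 0) l = 0.
Proof. induction l as [|x l IH]; simpl; [|rewrite IH]; lra. Qed.

Lemma sum_le_sub {T} (P P' : T -> Prop) (w : T -> R) (c : R) :
  (forall x, P x -> P' x) -> sum_le P' w c -> sum_le P w c.
Proof. intros HPP' Hsum l Hl HlP. apply Hsum; auto. Qed.

Lemma sum_le_eq {T} (w : T -> R) (t : T) :
  0 <= w t -> sum_le (fun x => x = t) w (w t).
Proof.
  intros Hw [|x [|y l]] Hl Ht; simpl.
  - exact Hw.
  - rewrite (Ht x (or_introl eq_refl)). lra.
  - rewrite (Ht x (or_introl eq_refl)), (Ht y (or_intror (or_introl eq_refl))) in Hl.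
    inversion Hl as [|? ? Hnotin]. simpl in Hnotin. tauto.
Qed.

Lemma sum_le_zero {T} (P : T -> Prop) (c : R) : 0 <= c -> sum_le P (fun _ => 0) c.
Proof. intros Hc l _ _. rewrite lsum_zero. exact Hc. Qed.

Section Fibres.

Variables (T U : Type) (P : T -> Prop) (w : T -> R) (c : U -> R) (f : T -> U).

Hypothesis sum_fibre : forall x, P x -> sum_le (fun y => P y /\ f y = f x) w (c (f x)).

Definition fibre_of (u : U) (x : T) : bool :=
  if excluded_middle_informative (f x = u) then true else false.

Lemma fibre_ofP u x : fibre_of u x = true <-> f x = u.
Proof.
  unfold fibre_of. destruct (excluded_middle_informative (f x = u)); split;
    congruence.
Qed.

Lemma lsum_le_image (m : list U) :
  forall l, NoDup l -> (forall x, In x l -> P x) -> NoDup m ->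
    (forall x, In x l -> In (f x) m) -> (forall u, In u m -> exists x, In x l /\ f x = u) ->
    lsum w l <= lsum c m.
Proof.
  induction m as [|u m IH]; intros l Hl HlP Hm Himg Hsurj.
  - destruct l as [|x l]; simpl; [lra|].
    destruct (Himg x (or_introl eq_refl)).
  - inversion Hm as [|? ? Hu Hm']; subst.
    rewrite (lsum_filter_split w (fibre_of u)). simpl.
    apply Rplus_le_compat.
    + destruct (Hsurj u (or_introl eq_refl)) as [x [Hx <-]].
      apply sum_fibre; [now apply HlP|now apply NoDup_filter|].
      intros y Hy. apply filter_In in Hy as [Hy Hyu].
      split; [now apply HlP|now apply fibre_ofP].
    + apply IH; auto.
      * now apply NoDup_filter.
      * intros x Hx. apply filter_In in Hx as [Hx _]. auto.
      * intros x Hx. apply filter_In in Hx as [Hx Hxu].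
        destruct (Himg x Hx) as [Heq|Hin]; auto.
        apply eq_sym, fibre_ofP in Heq. rewrite Heq in Hxu. discriminate.
      * intros u' Hu'. destruct (Hsurj u' (or_intror Hu')) as [x [Hx Hxu']].
        exists x. split; auto. apply filter_In. split; auto.
        destruct (fibre_of u x) eqn:Hxu; auto.
        apply fibre_ofP in Hxu. congruence.
Qed.

Lemma sum_le_fibres (Q : U -> Prop) (C : R) :
  (forall x, P x -> Q (f x)) -> sum_le Q c C -> sum_le P w C.
Proof.
  intros HPQ HQ l Hl HlP.
  set (dec := fun u v : U => excluded_middle_informative (u = v)).
  set (m := nodup dec (map f l)).
  apply Rle_trans with (lsum c m).
  - apply lsum_le_image; auto.
    + apply NoDup_nodup.
    + intros x Hx. apply nodup_In, in_map, Hx.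
    + intros u Hu. apply nodup_In, in_map_iff in Hu as [x [Hxu Hx]]. eauto.
  - apply HQ; [apply NoDup_nodup|].
    intros u Hu. apply nodup_In, in_map_iff in Hu as [x [<- Hx]]. auto.
Qed.

End Fibres.

Lemma ts_mor_id {Sigma} (A : TS Sigma) : is_ts_mor A A (fun x => x).
Proof. split; auto. Qed.

Lemma ts_mor_comp {Sigma} (A B C : TS Sigma) f g :
  is_ts_mor A B f -> is_ts_mor B C g -> is_ts_mor A C (fun x => g (f x)).
Proof. intros [Hf0 Hf] [Hg0 Hg]. split; [congruence|auto]. Qed.

Lemma prob_mor_id {Sigma} (P : Prob Sigma) : is_prob_mor P P (fun x => x).
Proof.
  split; [apply ts_mor_id|].
  intros s a t Ht. apply sum_le_sub with (P' := fun x => x = t); [tauto|].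
  apply sum_le_eq, mu_range, Ht.
Qed.

Lemma prob_mor_comp {Sigma} (P Q U : Prob Sigma) f g :
  is_prob_mor P Q f -> is_prob_mor Q U g -> is_prob_mor P U (fun x => g (f x)).
Proof.
  intros [Hf_ts Hf] [Hg_ts Hg]. split; [now apply ts_mor_comp with (pts Q)|].
  intros s a t Ht.
  apply sum_le_fibres with (c := mu Q (f s) a) (f := f)
    (Q := fun u => trans (pts Q) (f s) a u /\ g u = g (f t)).
  - intros x [Hx _]. apply sum_le_sub with (2 := Hf s a x Hx). tauto.
  - intros x [Hx Hgx]. split; auto. apply Hf_ts, Hx.
  - apply Hg, Hf_ts, Ht.
Qed.

Definition null_prob {Sigma} (T : TS Sigma) : Prob Sigma.
Proof.
  refine (@mkProb Sigma T (fun _ _ _ => 0) _ _ _).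
  - intros. lra.
  - intros s a. exists nil. intros t [_ Hpos]. lra.
  - intros s a. apply sum_le_zero. lra.
Defined.

Lemma null_prob_mor {Sigma} (T : TS Sigma) (P : Prob Sigma) f :
  is_ts_mor T (pts P) f -> is_prob_mor (null_prob T) P f.
Proof.
  intros Hf. split; [exact Hf|].
  intros s a t Ht. apply sum_le_zero, mu_range, Hf, Ht.
Qed.

Theorem theorem2 (Sigma : Type) :
  (* Prob_Sigma is a category (identities and composites are morphisms) and
     F is a functor: it sends morphisms to TS-morphisms, preserving identities
     and composition (F_mor of the identity/composite is the identity/composite). *)
  ((forall P : Prob Sigma, is_prob_mor P P (fun x => x)) /\
   (forall (P Q U : Prob Sigma) f g,
       is_prob_mor P Q f -> is_prob_mor Q U g -> is_prob_mor P U (fun x => g (f x))) /\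
   (forall (P Q : Prob Sigma) f,
       is_prob_mor P Q f -> is_ts_mor (F_ob P) (F_ob Q) (F_mor P Q f)) /\
   (forall P : Prob Sigma, forall x, F_mor P P (fun y => y) x = x) /\
   (forall (P Q U : Prob Sigma) f g x,
       F_mor P U (fun y => g (f y)) x = F_mor Q U g (F_mor P Q f x))) /\
  (* F is a coreflection: it has a left adjoint G (given by universal arrows
     eta_T : T -> F (G T)) whose unit eta is a natural isomorphism. *)
  (exists (G : TS Sigma -> Prob Sigma)
          (eta : forall T : TS Sigma, st T -> st (F_ob (G T))),
     (forall T : TS Sigma, is_ts_mor T (F_ob (G T)) (eta T)) /\
     (forall (T : TS Sigma) (P : Prob Sigma) (f : st T -> st (F_ob P)),
        is_ts_mor T (F_ob P) f ->
        exists g : st (pts (G T)) -> st (pts P),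
          is_prob_mor (G T) P g /\
          (forall x, F_mor (G T) P g (eta T x) = f x) /\
          (forall g' : st (pts (G T)) -> st (pts P),
             is_prob_mor (G T) P g' ->
             (forall x, F_mor (G T) P g' (eta T x) = f x) ->
             forall y, g' y = g y)) /\
     (forall T : TS Sigma,
        exists inv : st (F_ob (G T)) -> st T,
          is_ts_mor (F_ob (G T)) T inv /\
          (forall x, inv (eta T x) = x) /\
          (forall y, eta T (inv y) = y))).
Proof.
  split.
  - split; [exact prob_mor_id|].
    split; [exact prob_mor_comp|].
    split; [now intros P Q f []|].
    split; reflexivity.
  - exists null_prob, (fun T x => x).
    split; [intros T; apply ts_mor_id|].
    split.
    + intros T P f Hf. exists f.
      split; [now apply null_prob_mor|].
      split; [reflexivity|].
      intros g' _ Hg' y. apply Hg'.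
    + intros T. exists (fun x => x).
      split; [apply ts_mor_id|]. split; reflexivity.
Qed.
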